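(* Let $(X_j,d_j,\tau_j)$, $j\in\mathbb N$, be a sequence of compact timed-metric-spaces such that: (i) (equibounded) there is $D>0$ with $\operatorname{diam}_{d_j}(X_j)\le D$ for all $j$; (ii) (equicompact) for every $R\in(0,D]$ there is $N(R)\in\mathbb N$ such that for every $j$ there are points $x^j_{R,1},\dots,x^j_{R,N(R)}\in X_j$ with $X_j\subset\bigcup_{i=1}^{N(R)}B_{d_j}(x^j_{R,i},R)$; (iii) there is $\tau_{max}>0$ with $\tau_j(X_j)\subset[0,\tau_{max}]$ for all $j$. Then a subsequence (still denoted $(X_j,d_j,\tau_j)$) converges in the intrinsic timed Hausdorff sense to a compact timed-metric-space $(\bar X_\infty,d_\infty,\tau_\infty)$, i.e. $d^\kappa_{\tau-H}\big((X_j,d_j,\tau_j),(\bar X_\infty,d_\infty,\tau_\infty)\big)\to0$. In fact, there exist a compact set $Z\subset\ell^\infty$ and timed-Fréchet maps (which are distance and time preserving) $$\varphi_j:X_j\to[0,\tau_{max}]\times Z\subset\ell^\infty\ (j\in\mathbb N),\qquad \varphi_\infty:\bar X_\infty\to[0,\tau_{max}]\times Z\subset\ell^\infty,$$ such that $$d_H^{[0,\tau_{max}]\times Z}\big(\varphi_j(X_j),\varphi_\infty(\bar X_\infty)\big)\to0 .$$ In addition there exist an uncountable index set $\mathcal A$ (of ''addresses'') and surjective maps $\mathcal I^j:\mathcal A\to X_j$ ($j\in\mathbb N$) and $\mathcal I^\infty:\mathcal A\to\bar X_\infty$ such that, as $j\to\infty$, $$\sup_{\alpha\in\mathcal A}\big\|\varphi_j(\mathcal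 I^j(\alpha))-\varphi_\infty(\mathcal I^\infty(\alpha))\big\|_{\infty}\to0 .$$ In particular $$\sup_{\alpha\in\mathcal A}\big|\tau_j(\mathcal I^j(\alpha))-\tau_\infty(\mathcal I^\infty(\alpha))\big|\to0 \quad\text{and}\quad \sup_{\alpha,\alpha'\in\mathcal A}\big|d_j(\mathcal I^j(\alpha),\mathcal I^j(\alpha'))-d_\infty(\mathcal I^\infty(\alpha),\mathcal I^\infty(\alpha'))\big|\to0 .$$
   Context: $\ell^\infty$ is the Banach space of bounded real sequences $(s_0,s_1,s_2,\dots)$ with $d_{\ell^\infty}(s,r)=\|s-r\|_\infty=\sup_i|s_i-r_i|$. For subsets $U,W$ of a metric space $(Z',d_{Z'})$, the Hausdorff distance is $d_H^{Z'}(U,W)=\inf\{r>0:\forall u\in U\,\exists w\in W,\ d_{Z'}(u,w)<r,\ \text{and}\ \forall w\in W\,\exists u\in U,\ d_{Z'}(u,w)<r\}$. A timed-metric-space $(X,d,\tau)$ is a metric space $(X,d)$ together with a function $\tau:X\to[0,\infty)$ that is Lipschitz with constant $1$. Given a compact timed-metric-space $(X,d,\tau)$ with $\tau(X)\subset[0,\tau_{max}]$ and a countable dense sequence of points $\mathcal N=\{x_1,x_2,x_3,\dots\}\subset X$, the timed-Fréchet map is $\kappa_{\tau,X,\mathcal N}:X\to[0,\tau_{max}]\times\ell^\infty\subset\ell^\infty$, $\kappa_{\tau,X,\mathcal N}(x)=(\tau(x),d(x_1,x),d(x_2,x),d(x_3,x),\dots)$; here $[0,\tau_{max}]\times Z$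 for $Z\subset\ell^\infty$ denotes the set of sequences $(w_0,z_1,z_2,\dots)$ with $w_0\in[0,\tau_{max}]$ and $(z_1,z_2,\dots)\in Z$. Such maps are distance preserving ($\|\kappa_{\tau,X,\mathcal N}(x)-\kappa_{\tau,X,\mathcal N}(y)\|_\infty=d(x,y)$) and time preserving (the $0$-th coordinate of $\kappa_{\tau,X,\mathcal N}(x)$ is $\tau(x)$). The intrinsic timed Hausdorff distance between compact timed-metric-spaces is $d^\kappa_{\tau-H}\big((X_1,d_1,\tau_1),(X_2,d_2,\tau_2)\big)=\inf d_H^{\ell^\infty}\big(\kappa_{\tau_1,X_1,\mathcal N_1}(X_1),\kappa_{\tau_2,X_2,\mathcal N_2}(X_2)\big)$, the infimum over all countable dense sequences $\mathcal N_i$ in $X_i$ (all choices and orderings); convergence in the intrinsic timed Hausdorff sense means this distance tends to $0$. *)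

From Stdlib Require Import Reals List.
Open Scope R_scope.

Definition is_metric {X : Type} (d : X -> X -> R) : Prop :=
  (forall x y, 0 <= d x y) /\
  (forall x y, d x y = 0 <-> x = y) /\
  (forall x y, d x y = d y x) /\
  (forall x y z, d x z <= d x y + d y z).

(* open sets and (open-cover) compactness w.r.t. a family of open balls;
   [ball x r y] means "y lies in the open ball of radius r around x". *)
Definition ball_open {T : Type} (ball : T -> R -> T -> Prop) (U : T -> Prop) : Prop :=
  forall x, U x -> exists r, 0 < r /\ forall y, ball x r y -> U y.

Definition ball_compact {T : Type} (ball : T -> R -> T -> Prop) (K : T -> Prop) : Prop :=
  forall (I : Type) (U : I -> T -> Prop),
    (forall i, ball_open ball (U i)) ->
    (forall x, K x -> exists i, U i x) ->
    exists l : list I, forall x, K x -> exists i, In i l /\ U i x.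

Definition metric_ball {X : Type} (d : X -> X -> R) (x : X) (r : R) (y : X) : Prop :=
  d x y < r.

Definition compact_timed_metric_space {X : Type} (d : X -> X -> R) (tau : X -> R) : Prop :=
  is_metric d /\
  ball_compact (metric_ball d) (fun _ => True) /\
  (forall x, 0 <= tau x) /\
  (forall x y, Rabs (tau x - tau y) <= d x y).

Definition seqR := nat -> R.

Definition linf_bounded (s : seqR) : Prop := exists M, forall i, Rabs (s i) <= M.

Definition linf_lt (s t : seqR) (r : R) : Prop :=
  exists delta, delta < r /\ forall i, Rabs (s i - t i) <= delta.

Definition linf_le (s t : seqR) (r : R) : Prop :=
  forall i, Rabs (s i - t i) <= r.

Definition linf_compact (Z : seqR -> Prop) : Prop :=
  (forall z, Z z -> linf_bounded z) /\ ball_compact (fun s r t => linf_lt s t r) Z.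

Definition hausdorff_lt (A B : seqR -> Prop) (eps : R) : Prop :=
  exists r, 0 < r /\ r < eps /\
    (forall u, A u -> exists w, B w /\ linf_lt u w r) /\
    (forall w, B w -> exists u, A u /\ linf_lt u w r).

(* [0,tmax] x Z : sequences (w_0, z_1, z_2, ...) with w_0 in [0,tmax] and
   (z_1, z_2, ...) in Z (Z is stored with z_1 at index 0) *)
Definition time_slab (tmax : R) (Z : seqR -> Prop) (w : seqR) : Prop :=
  0 <= w 0%nat <= tmax /\ Z (fun k => w (S k)).

Definition image {X : Type} (f : X -> seqR) : seqR -> Prop :=
  fun w => exists x, f x = w.

(* countable dense sequence N = {x_1, x_2, ...} (x_{k+1} = N k) *)
Definition dense_seq {X : Type} (d : X -> X -> R) (N : nat -> X) : Prop :=
  forall x eps, 0 < eps -> exists k, d (N k) x < eps.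

Definition kappa {X : Type} (tau : X -> R) (d : X -> X -> R) (N : nat -> X) (x : X) : seqR :=
  fun i => match i with O => tau x | S k => d (N k) x end.

(* intrinsic timed Hausdorff distance  d^kappa_{tau-H}(X1, X2) < eps
   (infimum over all countable dense sequences N1, N2) *)
Definition intrinsic_tH_lt {X1 X2 : Type}
  (d1 : X1 -> X1 -> R) (tau1 : X1 -> R) (d2 : X2 -> X2 -> R) (tau2 : X2 -> R)
  (eps : R) : Prop :=
  exists (N1 : nat -> X1) (N2 : nat -> X2),
    dense_seq d1 N1 /\ dense_seq d2 N2 /\
    hausdorff_lt (image (kappa tau1 d1 N1)) (image (kappa tau2 d2 N2)) eps.

Definition countable_type (A : Type) : Prop :=
  exists f : A -> nat, forall a b, f a = f b -> a = b.

Definition uncountable_type (A : Type) : Prop := ~ countable_type A.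

Definition surj {A B : Type} (f : A -> B) : Prop := forall b, exists a, f a = b.

From Stdlib Require Import Reals Lra Lia List Classical ClassicalEpsilon
  FunctionalExtensionality ProofIrrelevance Eqdep_dec.
From Stdlib Require Cantor.
Open Scope R_scope.

(* Equicompactness provides, for each radius [r_m], nets of a common size [N_m] in every [X_j].
   Enumerating all net points by a single index, their mutual distances and times are bounded,
   so a diagonal subsequence makes all of them converge. The limits define a Fréchet embedding
   of a countable set into l^oo whose closure is a compact timed-metric space [X_oo]. Along a
   further subsequence the level-[j] net of [X_j] reproduces the limits up to [r_j], so that
   every point of [X_j] corresponds to a point of [X_oo] within [O(r_j)] and conversely.
   Choosing the dense sequence of [X_j] to follow the limit points coordinate by coordinate
   turns this correspondence into [O(r_j)]-closeness of the timed-Fréchet embeddings, both in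
   Hausdorff distance and along addresses, i.e. along compatible families of corresponding
   points. *)

(** * Real numbers and limits *)

Lemma Rabs_sub_triang a b c : Rabs (a - c) <= Rabs (a - b) + Rabs (b - c).
Proof. replace (a - c) with ((a - b) + (b - c)) by ring. apply Rabs_triang. Qed.

Lemma Rabs_le_bounds x c : Rabs x <= c -> - c <= x <= c.
Proof. unfold Rabs. destruct Rcase_abs; intros; lra. Qed.

Lemma eq_of_dist_le_all x y : (forall eps, 0 < eps -> Rabs (x - y) <= eps) -> x = y.
Proof.
  intros H. destruct (Req_dec x y) as [|Hne]; auto.
  assert (0 < Rabs (x - y)) by (apply Rabs_pos_lt; lra).
  specialize (H (Rabs (x - y) / 2) ltac:(lra)). lra.
Qed.

Lemma dist_sub_dist_le {T : Type} (d : T -> T -> R) :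
  (forall x y, d x y = d y x) -> (forall x y z, d x z <= d x y + d y z) ->
  forall a b x y, Rabs (d a x - d b y) <= d a b + d x y.
Proof.
  intros Hsym Htri a b x y.
  pose proof (Htri a b x). pose proof (Htri b a y).
  pose proof (Htri a x y). pose proof (Htri b y x).
  rewrite (Hsym b a), (Hsym y x) in *. apply Rabs_le. split; lra.
Qed.

Section Metric.
Context {T : Type} {d : T -> T -> R} (Hd : is_metric d).

Lemma metric_nonneg x y : 0 <= d x y.
Proof. apply Hd. Qed.

Lemma metric_refl x : d x x = 0.
Proof. apply Hd. reflexivity. Qed.

Lemma metric_sym x y : d x y = d y x.
Proof. apply Hd. Qed.

Lemma metric_triang x y z : d x z <= d x y + d y z.
Proof. apply Hd. Qed.

Lemma metric_dist_sub_le a b x y : Rabs (d a x - d b y) <= d a b + d x y.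
Proof. apply dist_sub_dist_le; [apply metric_sym | apply metric_triang]. Qed.

End Metric.

Lemma Un_cv_const c : Un_cv (fun _ => c) c.
Proof. intros eps H. exists 0%nat. intros. unfold Rdist. rewrite Rminus_diag, Rabs_R0. auto. Qed.

Lemma Un_cv_ext (u v : nat -> R) l : (forall n, u n = v n) -> Un_cv u l -> Un_cv v l.
Proof.
  intros H Hu eps He. destruct (Hu eps He) as [N HN].
  exists N. intros n Hn. rewrite <- H. auto.
Qed.

Lemma Un_cv_subseq (u : nat -> R) l (g : nat -> nat) :
  Un_cv u l -> (forall n, (n <= g n)%nat) -> Un_cv (fun n => u (g n)) l.
Proof.
  intros H Hg eps Heps. destruct (H eps Heps) as [N HN].
  exists N. intros n Hn. apply HN. specialize (Hg n). lia.
Qed.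

Lemma Un_cv_ge (u : nat -> R) l c : Un_cv u l -> (forall n, c <= u n) -> c <= l.
Proof. intros Hu H. exact (Rle_cv_lim H (Un_cv_const c) Hu). Qed.

Lemma Un_cv_le (u : nat -> R) l c : Un_cv u l -> (forall n, u n <= c) -> l <= c.
Proof. intros Hu H. exact (Rle_cv_lim H Hu (Un_cv_const c)). Qed.

Lemma Un_cv_le_frequently (u : nat -> R) l c : Un_cv u l ->
  (forall J, exists j, (J <= j)%nat /\ u j < c) -> l <= c.
Proof.
  intros Hu H. apply Rnot_lt_le. intro Hlt.
  destruct (Hu (l - c)) as [N HN]; [lra|].
  destruct (H N) as [j [Hj Hc]]. specialize (HN j Hj).
  unfold Rdist in HN. apply Rabs_def2 in HN. lra.
Qed.

Lemma Un_cv_dist_le (u : nat -> R) l c a n : Un_cv u l ->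
  (forall m, (n <= m)%nat -> Rabs (c - u m) <= a) -> Rabs (c - l) <= a.
Proof.
  intros Hu H. apply Rnot_lt_le. intro Hlt.
  destruct (Hu (Rabs (c - l) - a)) as [N HN]; [lra|].
  specialize (HN (max n N) ltac:(lia)). specialize (H (max n N) ltac:(lia)).
  unfold Rdist in HN. pose proof (Rabs_sub_triang c (u (max n N)) l). lra.
Qed.

Definition eventually (P : nat -> Prop) : Prop := exists N, forall j, (N <= j)%nat -> P j.

Lemma eventually_and (P Q : nat -> Prop) :
  eventually P -> eventually Q -> eventually (fun j => P j /\ Q j).
Proof.
  intros [N1 H1] [N2 H2]. exists (max N1 N2). intros j Hj.
  split; [apply H1 | apply H2]; lia.
Qed.

Lemma eventually_forall_lt n (P : nat -> nat -> Prop) :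
  (forall k, (k < n)%nat -> eventually (P k)) ->
  eventually (fun j => forall k, (k < n)%nat -> P k j).
Proof.
  induction n as [|n IH]; intros H.
  - exists 0%nat. intros; lia.
  - destruct IH as [N1 H1]; [intros k Hk; apply H; lia|].
    destruct (H n) as [N2 H2]; [lia|].
    exists (max N1 N2). intros j Hj k Hk.
    destruct (Nat.eq_dec k n) as [->|]; [apply H2 | apply H1]; lia.
Qed.

Lemma Un_cv_eventually_close (u : nat -> R) l eps :
  Un_cv u l -> 0 < eps -> eventually (fun j => Rabs (u j - l) <= eps).
Proof.
  intros Hu Heps. destruct (Hu eps Heps) as [N HN].
  exists N. intros j Hj. apply Rlt_le, HN, Hj.
Qed.

Definition inv_succ (n : nat) : R := / (INR n + 1).

Lemma inv_succ_pos n : 0 < inv_succ n.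
Proof. unfold inv_succ. apply Rinv_0_lt_compat. pose proof (pos_INR n). lra. Qed.

Lemma inv_succ_le n m : (n <= m)%nat -> inv_succ m <= inv_succ n.
Proof.
  intros H. unfold inv_succ. apply Rinv_le_contravar.
  - pose proof (pos_INR n). lra.
  - apply le_INR in H. lra.
Qed.

Lemma inv_succ_le_1 n : inv_succ n <= 1.
Proof.
  rewrite <- Rinv_1. unfold inv_succ. apply Rinv_le_contravar; [lra|].
  pose proof (pos_INR n). lra.
Qed.

Lemma inv_succ_small eps : 0 < eps -> exists n, inv_succ n < eps.
Proof.
  intros H. destruct (archimed_cor1 eps H) as [N [HN HN0]].
  exists N. eapply Rle_lt_trans; [|apply HN]. unfold inv_succ.
  apply Rinv_le_contravar; [apply lt_0_INR; auto | lra].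
Qed.

Lemma scaled_inv_succ_small c eps : 0 < c -> 0 < eps -> exists n, c * inv_succ n < eps.
Proof.
  intros Hc Heps. destruct (inv_succ_small (eps / c)) as [n Hn].
  { apply Rdiv_lt_0_compat; assumption. }
  exists n. apply Rmult_lt_compat_l with (r := c) in Hn; [|exact Hc].
  replace (c * (eps / c)) with eps in Hn by (field; lra). exact Hn.
Qed.

(** * Sequences in l^oo *)

Lemma linf_le_sym s t r : linf_le s t r -> linf_le t s r.
Proof. intros H i. rewrite Rabs_minus_sym. apply H. Qed.

Lemma linf_le_trans s t u a b : linf_le s t a -> linf_le t u b -> linf_le s u (a + b).
Proof.
  intros H1 H2 i. pose proof (Rabs_sub_triang (s i) (t i) (u i)).
  specialize (H1 i). specialize (H2 i). lra.
Qed.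

Lemma linf_le_weaken s t a b : linf_le s t a -> a <= b -> linf_le s t b.
Proof. intros H Hab i. specialize (H i). lra. Qed.

Lemma linf_le_refl s a : 0 <= a -> linf_le s s a.
Proof. intros H i. rewrite Rminus_diag, Rabs_R0. exact H. Qed.

Lemma linf_le_lt s t a b : linf_le s t a -> a < b -> linf_lt s t b.
Proof. intros H Hab. exists a. auto. Qed.

Definition linf_closure (U : seqR -> Prop) (z : seqR) : Prop :=
  forall eps, 0 < eps -> exists u, U u /\ linf_le z u eps.

Definition totally_bounded (U : seqR -> Prop) : Prop :=
  forall eps, 0 < eps -> exists l : list seqR,
    forall u, U u -> exists c, In c l /\ linf_le u c eps.

(* Cauchy sequences come with an explicit modulus [a], as produced by the nested-ball argument. *)
Definition linf_complete (K : seqR -> Prop) : Prop :=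
  forall (x : nat -> seqR) (a : nat -> R), (forall n, K (x n)) ->
    (forall n m, (n <= m)%nat -> linf_le (x n) (x m) (a n)) ->
    (forall eps, 0 < eps -> exists n, a n < eps) ->
    exists z, K z /\ forall n, linf_le (x n) z (a n).

Lemma linf_closure_incl U u : U u -> linf_closure U u.
Proof. intros H eps Heps. exists u. split; auto. apply linf_le_refl. lra. Qed.

Lemma linf_closure_coord U i lo hi w :
  (forall u, U u -> lo <= u i <= hi) -> linf_closure U w -> lo <= w i <= hi.
Proof.
  intros H Hw. split; apply Rle_plus_epsilon; intros eps Heps;
    destruct (Hw eps Heps) as [u [Uu Hwu]];
    specialize (Hwu i); specialize (H u Uu); apply Rabs_le_bounds in Hwu; lra.
Qed.

Lemma totally_bounded_closure U : totally_bounded U -> totally_bounded (linf_closure U).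
Proof.
  intros H eps Heps.
  destruct (H (eps / 2)) as [l Hl]; [lra|].
  exists l. intros u Hu.
  destruct (Hu (eps / 2)) as [v [Hv Huv]]; [lra|].
  destruct (Hl v Hv) as [c [Hc Hvc]].
  exists c. split; auto.
  replace eps with (eps / 2 + eps / 2) by field. eapply linf_le_trans; eauto.
Qed.

Lemma linf_closure_complete U : linf_complete (linf_closure U).
Proof.
  intros x a Hx Hcau Ha.
  assert (Hc : forall i, {l | Un_cv (fun n => x n i) l}).
  { intro i. apply R_complete. intros eps Heps.
    destruct (Ha (eps / 2)) as [N HN]; [lra|].
    exists N. intros n m Hn Hm. unfold Rdist.
    pose proof (Hcau N n Hn i) as Hn'. pose proof (Hcau N m Hm i) as Hm'.
    pose proof (Rabs_sub_triang (x n i) (x N i) (x m i)) as Htri.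
    rewrite (Rabs_minus_sym (x n i) (x N i)) in Htri. lra. }
  set (z := fun i => proj1_sig (Hc i)).
  assert (Hz : forall n, linf_le (x n) z (a n)).
  { intros n i. unfold z. destruct (Hc i) as [l Hl]; simpl.
    apply (Un_cv_dist_le _ l _ _ n Hl). intros m Hm. apply Hcau; auto. }
  exists z. split; auto.
  intros eps Heps.
  destruct (Ha (eps / 2)) as [n Hn]; [lra|].
  destruct (Hx n (eps / 2)) as [u [Hu Hxu]]; [lra|].
  exists u. split; auto.
  replace eps with (eps / 2 + eps / 2) by field.
  apply linf_le_trans with (x n); [|exact Hxu].
  apply linf_le_weaken with (a n); [apply linf_le_sym, Hz | lra].
Qed.

Definition finitely_covered {I : Type} (U : I -> seqR -> Prop) (S : seqR -> Prop) : Prop :=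
  exists l : list I, forall x, S x -> exists i, In i l /\ U i x.

Lemma finitely_covered_union {I : Type} (U : I -> seqR -> Prop) (S : seqR -> Prop)
  (centers : list seqR) eps :
  (forall c, In c centers -> finitely_covered U (fun x => S x /\ linf_le x c eps)) ->
  finitely_covered U (fun x => S x /\ exists c, In c centers /\ linf_le x c eps).
Proof.
  induction centers as [|c0 cs IH]; intros H.
  - exists nil. intros x [_ [c [[] _]]].
  - destruct (H c0 (or_introl eq_refl)) as [l0 Hl0].
    destruct IH as [l1 Hl1]; [intros c Hc; apply H; right; auto|].
    exists (l0 ++ l1). intros x [Sx [c [[<-|Hc] Hxc]]].
    + destruct (Hl0 x (conj Sx Hxc)) as [i [Hi Ui]].
      exists i. split; auto. apply in_or_app. auto.
    + destruct (Hl1 x (conj Sx (ex_intro _ c (conj Hc Hxc)))) as [i [Hi Ui]].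
      exists i. split; auto. apply in_or_app. auto.
Qed.

Lemma uncovered_ball {I : Type} (U : I -> seqR -> Prop) (K S : seqR -> Prop) eps :
  totally_bounded K -> (forall x, S x -> K x) -> ~ finitely_covered U S -> 0 < eps ->
  exists c, ~ finitely_covered U (fun x => S x /\ linf_le x c eps).
Proof.
  intros HK HSK HS Heps. apply NNPP. intro Hno.
  destruct (HK eps Heps) as [cs Hcs].
  apply HS. destruct (finitely_covered_union U S cs eps) as [l Hl].
  { intros c _. apply NNPP. intro Hc. apply Hno. exists c. exact Hc. }
  exists l. intros x Sx. apply Hl. split; auto.
Qed.

Fixpoint shrink (K : seqR -> Prop) (center : (seqR -> Prop) -> nat -> seqR) (n : nat)
  : seqR -> Prop :=
  match n with
  | O => K
  | S n' => fun x => shrink K center n' x /\ linf_le x (center (shrink K center n') n) (inv_succ n)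
  end.

Lemma shrink_incl K center n x : shrink K center n x -> K x.
Proof. revert x. induction n; simpl; intros x H; auto. apply IHn, H. Qed.

Lemma shrink_antimono K center n m x : (n <= m)%nat -> shrink K center m x -> shrink K center n x.
Proof. intros H. induction H; auto. intros Hx. apply IHle, Hx. Qed.

Lemma uncovered_nested_balls {I : Type} (U : I -> seqR -> Prop) (K : seqR -> Prop) :
  totally_bounded K -> ~ finitely_covered U K ->
  exists B : nat -> seqR -> Prop,
    (forall n x, B n x -> K x) /\
    (forall n m x, (n <= m)%nat -> B m x -> B n x) /\
    (forall n, exists c, forall x, B (S n) x -> linf_le x c (inv_succ (S n))) /\
    (forall n, ~ finitely_covered U (B n)).
Proof.
  intros HK HKU.
  pose (inh := inhabits (fun _ : nat => 0) : inhabited seqR).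
  pose (center := fun S n =>
    epsilon inh (fun c => ~ finitely_covered U (fun x => S x /\ linf_le x c (inv_succ n)))).
  exists (shrink K center). split; [apply shrink_incl|]. split; [apply shrink_antimono|].
  split; [intros n; exists (center (shrink K center n) (S n)); intros x Hx; apply Hx|].
  induction n as [|n IH]; simpl; auto.
  apply (epsilon_spec inh (fun c =>
    ~ finitely_covered U (fun x => shrink K center n x /\ linf_le x c (inv_succ (S n))))).
  apply (uncovered_ball U K); auto; [apply shrink_incl | apply inv_succ_pos].
Qed.

Lemma totally_bounded_complete_compact K :
  totally_bounded K -> linf_complete K -> ball_compact (fun s r t => linf_lt s t r) K.
Proof.
  intros Htb Hcomp I U Hopen Hcov. apply NNPP. intro Hbad.
  destruct (uncovered_nested_balls U K Htb Hbad) as [B [HBK [HBmono [HBball HBbad]]]].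
  assert (Hpt : forall n, exists x, B n x).
  { intros n. apply NNPP. intro H. apply (HBbad n). exists nil.
    intros x Hx. exfalso. apply H. exists x. exact Hx. }
  destruct (choice _ Hpt) as [pt Hpt'].
  destruct (choice _ HBball) as [c Hc].
  assert (Hcau : forall n m, (n <= m)%nat ->
            linf_le (pt (S n)) (pt (S m)) (2 * inv_succ (S n))).
  { intros n m Hnm. replace (2 * inv_succ (S n)) with (inv_succ (S n) + inv_succ (S n)) by ring.
    apply linf_le_trans with (c n); [apply Hc, Hpt'|].
    apply linf_le_sym, Hc, (HBmono (S n) (S m)); [lia | apply Hpt']. }
  destruct (Hcomp (fun n => pt (S n)) (fun n => 2 * inv_succ (S n))) as [z [Kz Hz]].
  { intros n. apply (HBK (S n)), Hpt'. }
  { exact Hcau. }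
  { intros eps Heps. destruct (inv_succ_small (eps / 2)) as [n Hn]; [lra|].
    exists n. pose proof (inv_succ_le n (S n) ltac:(lia)). lra. }
  destruct (Hcov z Kz) as [i Ui].
  destruct (Hopen i z Ui) as [r [Hr Hri]].
  destruct (inv_succ_small (r / 4)) as [n Hn]; [lra|].
  apply (HBbad (S n)). exists (i :: nil). intros y Hy. exists i. split; [left; auto|].
  apply Hri, linf_le_lt with (4 * inv_succ (S n)).
  - replace (4 * inv_succ (S n))
      with (2 * inv_succ (S n) + (inv_succ (S n) + inv_succ (S n))) by ring.
    apply linf_le_trans with (pt (S n)); [apply linf_le_sym, Hz|].
    apply linf_le_trans with (c n); [apply Hc, Hpt' | apply linf_le_sym, Hc, Hy].
  - pose proof (inv_succ_le n (S n) ltac:(lia)). lra.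
Qed.

(* Truncating at [B] makes the supremum exist for every sequence; it is the
   usual sup-norm of [s] whenever all [|s i| <= B]. *)
Definition truncated_abs_values (B : R) (s : seqR) (r : R) : Prop :=
  exists i, r = Rmin (Rabs (s i)) B.

Lemma truncated_abs_values_bound B s : bound (truncated_abs_values B s).
Proof. exists B. intros r [i ->]. apply Rmin_r. Qed.

Lemma truncated_abs_values_inhabited B s : exists r, truncated_abs_values B s r.
Proof. exists (Rmin (Rabs (s 0%nat)) B). exists 0%nat. reflexivity. Qed.

Definition sup_abs (B : R) (s : seqR) : R :=
  proj1_sig (completeness _ (truncated_abs_values_bound B s) (truncated_abs_values_inhabited B s)).

Lemma sup_abs_ge B s i : Rabs (s i) <= B -> Rabs (s i) <= sup_abs B s.
Proof.
  intros H. unfold sup_abs. destruct completeness as [m [Hub Hlub]]; simpl.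
  apply Hub. exists i. rewrite Rmin_left; auto.
Qed.

Lemma sup_abs_le B s c : (forall i, Rabs (s i) <= c) -> sup_abs B s <= c.
Proof.
  intros H. unfold sup_abs. destruct completeness as [m [Hub Hlub]]; simpl.
  apply Hlub. intros r [i ->]. eapply Rle_trans; [apply Rmin_l | apply H].
Qed.

Lemma sup_abs_nonneg B s : 0 <= B -> 0 <= sup_abs B s.
Proof.
  intros HB. unfold sup_abs. destruct completeness as [m [Hub Hlub]]; simpl.
  eapply Rle_trans; [|apply Hub; exists 0%nat; reflexivity].
  apply Rmin_glb; auto. apply Rabs_pos.
Qed.

Lemma ball_compact_subtype (P : seqR -> Prop) (dd : {w | P w} -> {w | P w} -> R) :
  (forall x y r, linf_lt (proj1_sig x) (proj1_sig y) r -> dd x y < r) ->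
  ball_compact (fun s r t => linf_lt s t r) P ->
  ball_compact (metric_ball dd) (fun _ => True).
Proof.
  intros Hlt Hc I U Hopen Hcov.
  (* Each member of the cover is enlarged to an open set of [seqR]: around each of its points [x]
     we take the sup-ball of half the radius witnessing openness at [x]. *)
  pose (U' := fun i y => exists (x : {w | P w}) rho, 0 < rho /\
                (forall z, dd x z < rho -> U i z) /\ linf_lt (proj1_sig x) y (rho / 2)).
  destruct (Hc I U') as [l Hl].
  - intros i y [x [rho [Hrho [Hball [e0 [He0 Hxy]]]]]].
    exists (rho / 2 - e0). split; [lra|].
    intros y' [e1 [He1 Hyy']].
    exists x, rho. split; auto. split; auto.
    exists (e0 + e1). split; [lra|]. intros k.
    specialize (Hxy k). specialize (Hyy' k).
    pose proof (Rabs_sub_triang (proj1_sig x k) (y k) (y' k)). lra.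
  - intros w Pw. destruct (Hcov (exist _ w Pw) Logic.I) as [i Ui].
    destruct (Hopen i _ Ui) as [rho [Hrho Hb]].
    exists i, (exist _ w Pw), rho. split; auto. split; [exact Hb|].
    apply linf_le_lt with 0; [apply linf_le_refl; lra | lra].
  - exists l. intros x _.
    destruct (Hl (proj1_sig x) (proj2_sig x)) as [i [Hi [x0 [rho [Hrho [Hb Hlt']]]]]].
    exists i. split; auto. apply Hb. apply Hlt in Hlt'. lra.
Qed.

Lemma kappa_lipschitz {X : Type} (d : X -> X -> R) (tau : X -> R) (N : nat -> X) :
  is_metric d -> (forall x y, Rabs (tau x - tau y) <= d x y) ->
  forall x y, linf_le (kappa tau d N x) (kappa tau d N y) (d x y).
Proof.
  intros Hd Hlip x y [|k]; simpl; [apply Hlip|].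
  pose proof (metric_dist_sub_le Hd (N k) (N k) x y) as Hk.
  rewrite (metric_refl Hd) in Hk. lra.
Qed.

(** * Pairing, subsequences and choice *)

Definition pair_nat (a b : nat) : nat := Cantor.to_nat (a, b).
Definition fst_nat (n : nat) : nat := fst (Cantor.of_nat n).
Definition snd_nat (n : nat) : nat := snd (Cantor.of_nat n).

Lemma fst_nat_pair a b : fst_nat (pair_nat a b) = a.
Proof. unfold fst_nat, pair_nat. rewrite Cantor.cancel_of_to. reflexivity. Qed.

Lemma snd_nat_pair a b : snd_nat (pair_nat a b) = b.
Proof. unfold snd_nat, pair_nat. rewrite Cantor.cancel_of_to. reflexivity. Qed.

Lemma pigeonhole_frequently (n : nat) (P : nat -> nat -> Prop) :
  (forall j, exists i, (i < n)%nat /\ P j i) ->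
  exists i, (i < n)%nat /\ forall J, exists j, (J <= j)%nat /\ P j i.
Proof.
  revert P; induction n as [|n IH]; intros P H.
  - destruct (H 0%nat) as [i [Hi _]]. lia.
  - destruct (classic (forall J, exists j, (J <= j)%nat /\ P j n)) as [Hy|Hn].
    + exists n. auto.
    + apply not_all_ex_not in Hn. destruct Hn as [J0 HJ0].
      destruct (IH (fun j i => P (j + J0)%nat i)) as [i [Hi Hi2]].
      { intros j. destruct (H (j + J0)%nat) as [i [Hi Pi]].
        exists i. split; auto. destruct (Nat.eq_dec i n) as [->|]; [|lia].
        exfalso. apply HJ0. exists (j + J0)%nat. split; [lia | auto]. }
      exists i. split; [lia|]. intros J. destruct (Hi2 J) as [j [Hj Pj]].
      exists (j + J0)%nat. split; [lia | auto].
Qed.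

Definition strictly_increasing (f : nat -> nat) : Prop := forall n, (f n < f (S n))%nat.

Lemma strictly_increasing_lt f : strictly_increasing f ->
  forall a b, (a < b)%nat -> (f a < f b)%nat.
Proof. intros Hf a b Hab. induction Hab; [apply Hf|]. specialize (Hf m). lia. Qed.

Lemma strictly_increasing_ge_id f : strictly_increasing f -> forall n, (n <= f n)%nat.
Proof. intros Hf n. induction n; [lia|]. specialize (Hf n). lia. Qed.

Lemma strictly_increasing_comp f g :
  strictly_increasing f -> strictly_increasing g -> strictly_increasing (fun n => f (g n)).
Proof. intros Hf Hg n. apply strictly_increasing_lt; auto. Qed.

Fixpoint increasing_majorant (J : nat -> nat) (m : nat) : nat :=
  match m with
  | O => J O
  | S m' => Nat.max (S (increasing_majorant J m')) (J (S m'))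
  end.

Lemma eventually_diagonal (P : nat -> nat -> Prop) :
  (forall m, eventually (P m)) ->
  exists phi, strictly_increasing phi /\ forall m, P m (phi m).
Proof.
  intros H. destruct (choice _ H) as [J HJ].
  exists (increasing_majorant J). split.
  - intros m. cbn [increasing_majorant]. lia.
  - intros m. apply HJ. destruct m; cbn [increasing_majorant]; lia.
Qed.

Lemma cluster_point_subseq (u : nat -> R) l : ValAdh u l ->
  exists f, strictly_increasing f /\ Un_cv (fun n => u (f n)) l.
Proof.
  intros Hl.
  assert (Hg : forall N k, exists p, (N <= p)%nat /\ Rabs (u p - l) < inv_succ k).
  { intros N k. apply (Hl (disc l (mkposreal _ (inv_succ_pos k))) N).
    exists (mkposreal _ (inv_succ_pos k)). intros y Hy. exact Hy. }
  destruct (choice (fun Nk p => (fst Nk <= p)%nat /\ Rabs (u p - l) < inv_succ (snd Nk)))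
    as [g Hg']; [intros [N k]; apply Hg|].
  pose (f := fix f k := match k with O => g (O, O) | S k' => g (S (f k'), S k') end).
  exists f. split.
  - intros n. simpl. pose proof (proj1 (Hg' (S (f n), S n))). simpl in *. lia.
  - intros eps Heps. destruct (inv_succ_small eps Heps) as [N HN].
    exists N. intros n Hn. unfold Rdist.
    assert (Rabs (u (f n) - l) < inv_succ n) by (destruct n; apply (Hg' (_, _))).
    pose proof (inv_succ_le N n Hn). lra.
Qed.

Lemma bounded_cv_subseq (u : nat -> R) M : (forall n, Rabs (u n) <= M) ->
  exists f, strictly_increasing f /\ exists l, Un_cv (fun n => u (f n)) l.
Proof.
  intros HM.
  destruct (Bolzano_Weierstrass u (fun c => - M <= c <= M) (compact_P3 (- M) M)) as [l Hl].
  { intros n. apply Rabs_le_bounds, HM. }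
  destruct (cluster_point_subseq u l Hl) as [f [Hf Hcv]].
  exists f. split; [exact Hf|]. exists l. exact Hcv.
Qed.

Section Diagonal.

Variables (M : R) (v : nat -> nat -> R) (extract : (nat -> R) -> nat -> nat).
Hypothesis v_bounded : forall j n, Rabs (v j n) <= M.
Hypothesis extract_spec : forall u, (forall n, Rabs (u n) <= M) ->
  strictly_increasing (extract u) /\ exists l, Un_cv (fun n => u (extract u n)) l.

Fixpoint nested_extraction (n : nat) : nat -> nat :=
  match n with
  | O => extract (fun j => v j O)
  | S n' => fun j =>
      nested_extraction n' (extract (fun j' => v (nested_extraction n' j') (S n')) j)
  end.

Lemma extract_coord_increasing (h : nat -> nat) n :
  strictly_increasing (extract (fun j => v (h j) n)).
Proof. apply extract_spec. intros; apply v_bounded. Qed.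

Lemma nested_extraction_increasing n : strictly_increasing (nested_extraction n).
Proof.
  induction n as [|n IH]; simpl.
  - apply extract_coord_increasing with (h := fun j => j).
  - apply strictly_increasing_comp; [exact IH | apply extract_coord_increasing].
Qed.

Lemma nested_extraction_refines n m j : (n <= m)%nat ->
  exists q, (j <= q)%nat /\ nested_extraction m j = nested_extraction n q.
Proof.
  revert j. induction m as [|m IH]; intros j Hnm.
  - replace n with 0%nat by lia. exists j. auto.
  - destruct (Nat.eq_dec n (S m)) as [->|Hne]; [exists j; auto|].
    destruct (IH (extract (fun j' => v (nested_extraction m j') (S m)) j)) as [q [Hq Heq]];
      [lia|].
    exists q. split; [|exact Heq].
    pose proof (strictly_increasing_ge_id _
      (extract_coord_increasing (nested_extraction m) (S m)) j).
    lia.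
Qed.

Lemma nested_extraction_cv n : exists l, Un_cv (fun j => v (nested_extraction n j) n) l.
Proof.
  destruct n as [|n]; simpl.
  - apply (extract_spec (fun j => v j O)). intros; apply v_bounded.
  - apply (extract_spec (fun j' => v (nested_extraction n j') (S n))). intros; apply v_bounded.
Qed.

Lemma diagonal_extraction_increasing : strictly_increasing (fun j => nested_extraction j j).
Proof.
  intros j. simpl. apply strictly_increasing_lt; [apply nested_extraction_increasing|].
  pose proof (strictly_increasing_ge_id _
    (extract_coord_increasing (nested_extraction j) (S j)) (S j)).
  lia.
Qed.

Lemma diagonal_extraction_cv n : exists l, Un_cv (fun j => v (nested_extraction j j) n) l.
Proof.
  destruct (nested_extraction_cv n) as [l Hl]. exists l.
  intros eps Heps. destruct (Hl eps Heps) as [N HN].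
  exists (max n N). intros j Hj.
  destruct (nested_extraction_refines n j j) as [q [Hq ->]]; [lia|].
  apply HN. lia.
Qed.

End Diagonal.

Lemma diagonal_extraction (v : nat -> nat -> R) M : (forall j n, Rabs (v j n) <= M) ->
  exists sg, strictly_increasing sg /\
  exists lim : nat -> R, forall n, Un_cv (fun j => v (sg j) n) (lim n).
Proof.
  intros HM.
  destruct (choice (fun u f => (forall n, Rabs (u n) <= M) ->
      strictly_increasing f /\ exists l, Un_cv (fun n => u (f n)) l)) as [extract Hextract].
  { intros u. destruct (classic (forall n, Rabs (u n) <= M)) as [Hu|Hu].
    - destruct (bounded_cv_subseq u M Hu) as [f Hf]. exists f. auto.
    - exists (fun n => n). intros Hu'. contradiction. }
  exists (fun j => nested_extraction v extract j j).
  split; [exact (diagonal_extraction_increasing M v extract HM Hextract)|].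
  exact (choice _ (diagonal_extraction_cv M v extract HM Hextract)).
Qed.

Lemma uncountable_bits_prod (B : Type) : B -> uncountable_type ((nat -> bool) * B).
Proof.
  intros b0 [f Hf].
  pose (g := fun s : nat -> bool => f (s, b0)).
  assert (Hg : forall s t, g s = g t -> s = t).
  { intros s t H. apply Hf in H. inversion H. auto. }
  pose (inh := inhabits (fun _ : nat => false)).
  pose (dec := fun n => epsilon inh (fun s => g s = n)).
  pose (diag := fun n => negb (dec n n)).
  assert (Hd : dec (g diag) = diag).
  { apply Hg. apply (epsilon_spec inh (fun s => g s = g diag)). exists diag. auto. }
  assert (H2 : diag (g diag) = negb (dec (g diag) (g diag))) by reflexivity.
  rewrite Hd in H2. destruct (diag (g diag)); discriminate.
Qed.

Lemma update_family (P : nat -> Type) (Q : forall j, P j -> Prop)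
  (f : forall j, P j) j0 (y : P j0) :
  (forall j, Q j (f j)) -> Q j0 y ->
  exists g : forall j, P j, (forall j, Q j (g j)) /\ g j0 = y.
Proof.
  intros Hf Hy.
  exists (fun j => match Nat.eq_dec j0 j with
                   | left e => eq_rect j0 P y j e
                   | right _ => f j end).
  split.
  - intros j. destruct (Nat.eq_dec j0 j) as [e|]; [destruct e; exact Hy | apply Hf].
  - destruct (Nat.eq_dec j0 j0) as [e|]; [|contradiction].
    rewrite (UIP_refl_nat _ e). reflexivity.
Qed.

(** * The limit space *)

Definition flat_net {Y : nat -> Type} (net : forall j, nat -> nat -> Y j) j a : Y j :=
  net j (fst_nat a) (snd_nat a).

Lemma flat_net_pair {Y : nat -> Type} (net : forall j, nat -> nat -> Y j) j m i :
  flat_net net j (pair_nat m i) = net j m i.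
Proof. unfold flat_net. rewrite fst_nat_pair, snd_nat_pair. reflexivity. Qed.

Set Implicit Arguments.
Record ConvergentNets (Y : nat -> Type) (d : forall j, Y j -> Y j -> R)
    (tau : forall j, Y j -> R) (D T : R) := {
  nets_metric : forall j, is_metric (d j);
  nets_lipschitz : forall j x y, Rabs (tau j x - tau j y) <= d j x y;
  nets_diam : forall j x y, d j x y <= D;
  nets_time : forall j x, 0 <= tau j x <= T;
  nets_diam_nonneg : 0 <= D;
  nets_time_nonneg : 0 <= T;
  radius : nat -> R;
  radius_pos : forall m, 0 < radius m;
  radius_antimono : forall m m', (m <= m')%nat -> radius m' <= radius m;
  radius_small : forall eps, 0 < eps -> exists m, radius m < eps;
  net_size : nat -> nat;
  net : forall j, nat -> nat -> Y j;
  net_covers : forall j m x, exists i, (i < net_size m)%nat /\ d j (net j m i) x < radius m;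
  lim_dist : nat -> nat -> R;
  lim_time : nat -> R;
  lim_dist_cv : forall a b,
    Un_cv (fun j => d j (flat_net net j a) (flat_net net j b)) (lim_dist a b);
  lim_time_cv : forall a, Un_cv (fun j => tau j (flat_net net j a)) (lim_time a);
  net_dist_accurate : forall j i, (i < net_size j)%nat -> forall i', (i' < net_size j)%nat ->
    Rabs (d j (net j j i) (net j j i') - lim_dist (pair_nat j i) (pair_nat j i')) <= radius j;
  net_time_accurate : forall j i, (i < net_size j)%nat ->
    Rabs (tau j (net j j i) - lim_time (pair_nat j i)) <= radius j }.
Unset Implicit Arguments.

Definition tail (w : seqR) : seqR := fun k => w (S k).

Lemma linf_le_tail w w' c : linf_le w w' c -> linf_le (tail w) (tail w') c.
Proof. intros H k. apply H. Qed.

Section LimitSpace.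

Context {Y : nat -> Type} {d : forall j, Y j -> Y j -> R} {tau : forall j, Y j -> R} {D T : R}.
Variable nets : ConvergentNets Y d tau D T.

Let Hd j := nets_metric nets j.

Lemma flat_net_dense j : dense_seq (d j) (flat_net (net nets) j).
Proof.
  intros x eps Heps. destruct (radius_small nets Heps) as [m Hm].
  destruct (net_covers nets j m x) as [i [Hi Hdi]].
  exists (pair_nat m i). rewrite flat_net_pair. lra.
Qed.

Lemma lim_dist_refl a : lim_dist nets a a = 0.
Proof.
  apply (UL_sequence _ _ _ (lim_dist_cv nets a a)).
  apply (Un_cv_ext (fun _ => 0)); [|apply Un_cv_const].
  intros j. symmetry. apply (metric_refl (Hd j)).
Qed.

Lemma lim_dist_sym a b : lim_dist nets a b = lim_dist nets b a.
Proof.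
  apply (UL_sequence _ _ _ (lim_dist_cv nets a b)).
  eapply Un_cv_ext; [|apply lim_dist_cv]. intros j. apply (metric_sym (Hd j)).
Qed.

Lemma lim_dist_triang a b c : lim_dist nets a c <= lim_dist nets a b + lim_dist nets b c.
Proof.
  eapply Rle_cv_lim; [|apply lim_dist_cv | apply CV_plus; apply lim_dist_cv].
  intros j. apply (metric_triang (Hd j)).
Qed.

Lemma lim_dist_sub_le a b x y :
  Rabs (lim_dist nets a x - lim_dist nets b y) <= lim_dist nets a b + lim_dist nets x y.
Proof. apply dist_sub_dist_le; [apply lim_dist_sym | apply lim_dist_triang]. Qed.

Lemma lim_dist_bounds a b : 0 <= lim_dist nets a b <= D.
Proof.
  split; [apply (Un_cv_ge _ _ _ (lim_dist_cv nets a b))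
        | apply (Un_cv_le _ _ _ (lim_dist_cv nets a b))];
    intros j; [apply (metric_nonneg (Hd j)) | apply (nets_diam nets)].
Qed.

Lemma lim_time_bounds a : 0 <= lim_time nets a <= T.
Proof.
  split; [apply (Un_cv_ge _ _ _ (lim_time_cv nets a))
        | apply (Un_cv_le _ _ _ (lim_time_cv nets a))];
    intros j; apply (nets_time nets).
Qed.

Lemma lim_time_lipschitz a b : Rabs (lim_time nets a - lim_time nets b) <= lim_dist nets a b.
Proof.
  eapply Rle_cv_lim; [|apply cv_cvabs, CV_minus; apply lim_time_cv | apply lim_dist_cv].
  intros j. apply (nets_lipschitz nets).
Qed.

Lemma lim_net_covers a m :
  exists i, (i < net_size nets m)%nat /\ lim_dist nets a (pair_nat m i) <= radius nets m.
Proof.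
  destruct (pigeonhole_frequently (net_size nets m)
    (fun j i => d j (net nets j m i) (flat_net (net nets) j a) < radius nets m)) as [i [Hi Hc]].
  { intros j. apply (net_covers nets). }
  exists i. split; auto. rewrite lim_dist_sym.
  apply (Un_cv_le_frequently _ _ _ (lim_dist_cv nets (pair_nat m i) a)).
  intros J. destruct (Hc J) as [j [Hj Hlt]]. exists j. split; auto.
  rewrite flat_net_pair. exact Hlt.
Qed.

(* Coordinate [S k] measures the distance to the limit point [fst_nat k] rather than [k]:
   [frechet_seq] below makes the same choice in every [Y j]. *)
Definition lim_embed a : seqR :=
  fun i => match i with O => lim_time nets a | S k => lim_dist nets (fst_nat k) a end.

Definition lim_set : seqR -> Prop := linf_closure (fun u => exists a, u = lim_embed a).

Definition Xinf : Type := {w | lim_set w}.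

Definition coords (x : Xinf) : seqR := proj1_sig x.

Definition dinf (x y : Xinf) : R := sup_abs (D + T) (fun i => coords x i - coords y i).

Definition tinf (x : Xinf) : R := coords x O.

Lemma lim_embed_in a : lim_set (lim_embed a).
Proof. apply linf_closure_incl. exists a. reflexivity. Qed.

Definition embed a : Xinf := exist _ (lim_embed a) (lim_embed_in a).

Definition Ninf k : Xinf := embed (fst_nat k).

Lemma lim_set_time w : lim_set w -> 0 <= w O <= T.
Proof. apply linf_closure_coord. intros u [a ->]. apply lim_time_bounds. Qed.

Lemma lim_set_dist w k : lim_set w -> 0 <= w (S k) <= D.
Proof. apply linf_closure_coord. intros u [a ->]. apply lim_dist_bounds. Qed.

Lemma Xinf_coord_diff (x y : Xinf) i : Rabs (coords x i - coords y i) <= D + T.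
Proof.
  destruct x as [x Hx], y as [y Hy]. unfold coords; simpl.
  pose proof (nets_diam_nonneg nets). pose proof (nets_time_nonneg nets).
  apply Rabs_le. destruct i as [|k].
  - pose proof (lim_set_time x Hx). pose proof (lim_set_time y Hy). lra.
  - pose proof (lim_set_dist x k Hx). pose proof (lim_set_dist y k Hy). lra.
Qed.

Lemma dinf_ge x y i : Rabs (coords x i - coords y i) <= dinf x y.
Proof. apply (sup_abs_ge _ (fun i => coords x i - coords y i)), Xinf_coord_diff. Qed.

Lemma dinf_le x y c : linf_le (coords x) (coords y) c -> dinf x y <= c.
Proof. apply sup_abs_le. Qed.

Lemma linf_le_dinf x y : linf_le (coords x) (coords y) (dinf x y).
Proof. intros i. apply dinf_ge. Qed.

Lemma dinf_metric : is_metric dinf.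
Proof.
  assert (Hnn : forall x y, 0 <= dinf x y).
  { intros x y. apply sup_abs_nonneg.
    pose proof (nets_diam_nonneg nets). pose proof (nets_time_nonneg nets). lra. }
  split; [exact Hnn|]. split; [|split].
  - intros x y. split.
    + intros H.
      assert (Hxy : forall i, coords x i = coords y i).
      { intros i. apply eq_of_dist_le_all. intros eps Heps.
        pose proof (dinf_ge x y i). lra. }
      destruct x as [x Hx], y as [y Hy]. unfold coords in Hxy; simpl in Hxy.
      apply subset_eq_compat, functional_extensionality, Hxy.
    + intros <-. apply Rle_antisym; [|apply Hnn]. apply dinf_le, linf_le_refl. lra.
  - intros x y. apply Rle_antisym; apply dinf_le, linf_le_sym, linf_le_dinf.
  - intros x y z. apply dinf_le. eapply linf_le_trans; apply linf_le_dinf.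
Qed.

Lemma dinf_embed a b : dinf (embed a) (embed b) = lim_dist nets a b.
Proof.
  apply Rle_antisym.
  - apply dinf_le. intros [|k]; simpl; [apply lim_time_lipschitz|].
    pose proof (lim_dist_sub_le (fst_nat k) (fst_nat k) a b) as H.
    rewrite lim_dist_refl in H. lra.
  - pose proof (dinf_ge (embed a) (embed b) (S (pair_nat a 0))) as H. simpl in H.
    rewrite fst_nat_pair, lim_dist_refl, Rminus_0_l, Rabs_Ropp, Rabs_right in H; [exact H|].
    apply Rle_ge, lim_dist_bounds.
Qed.

Lemma embed_approx (x : Xinf) eps : 0 < eps -> exists a, dinf x (embed a) <= eps.
Proof.
  intros Heps. destruct x as [w Hw]. destruct (Hw eps Heps) as [u [[a ->] Hwa]].
  exists a. apply dinf_le. exact Hwa.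
Qed.

Lemma Xinf_coord (x : Xinf) k : coords x (S k) = dinf (embed (fst_nat k)) x.
Proof.
  apply eq_of_dist_le_all. intros eps Heps.
  destruct (embed_approx x (eps / 2)) as [b Hb]; [lra|].
  pose proof (dinf_ge x (embed b) (S k)) as H1.
  change (coords (embed b) (S k)) with (lim_dist nets (fst_nat k) b) in H1.
  rewrite <- dinf_embed in H1.
  pose proof (metric_dist_sub_le dinf_metric (embed (fst_nat k)) (embed (fst_nat k)) (embed b) x)
    as H2.
  rewrite (metric_refl dinf_metric), (metric_sym dinf_metric (embed b)) in H2.
  pose proof (Rabs_sub_triang (coords x (S k)) (dinf (embed (fst_nat k)) (embed b))
    (dinf (embed (fst_nat k)) x)).
  lra.
Qed.

Lemma kappa_inf (x : Xinf) : kappa tinf dinf Ninf x = coords x.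
Proof.
  apply functional_extensionality. intros [|k]; [reflexivity|].
  symmetry. apply Xinf_coord.
Qed.

Lemma Xinf_net x m :
  exists i, (i < net_size nets m)%nat /\ dinf x (embed (pair_nat m i)) <= 2 * radius nets m.
Proof.
  destruct (embed_approx x (radius nets m)) as [a Ha]; [apply radius_pos|].
  destruct (lim_net_covers a m) as [i [Hi Hai]]. exists i. split; auto.
  pose proof (metric_triang dinf_metric x (embed a) (embed (pair_nat m i))) as Htri.
  rewrite dinf_embed in Htri. lra.
Qed.

Lemma Ninf_dense : dense_seq dinf Ninf.
Proof.
  intros x eps Heps. destruct (embed_approx x (eps / 2)) as [a Ha]; [lra|].
  exists (pair_nat a 0). unfold Ninf. rewrite fst_nat_pair, (metric_sym dinf_metric). lra.
Qed.

Lemma lim_embed_totally_bounded : totally_bounded (fun u => exists a, u = lim_embed a).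
Proof.
  intros eps Heps. destruct (radius_small nets Heps) as [m Hm].
  exists (map (fun i => lim_embed (pair_nat m i)) (seq 0 (net_size nets m))).
  intros u [a ->]. destruct (lim_net_covers a m) as [i [Hi Hai]].
  exists (lim_embed (pair_nat m i)). split.
  - apply (in_map (fun i => lim_embed (pair_nat m i))), in_seq. lia.
  - apply linf_le_weaken with (dinf (embed a) (embed (pair_nat m i)));
      [exact (linf_le_dinf (embed a) (embed (pair_nat m i)))|].
    rewrite dinf_embed. lra.
Qed.

Lemma Xinf_compact : compact_timed_metric_space dinf tinf.
Proof.
  split; [exact dinf_metric|]. split; [|split].
  - apply ball_compact_subtype.
    + intros x y r [e [He Hxy]]. exact (Rle_lt_trans _ _ _ (dinf_le x y e Hxy) He).
    + apply totally_bounded_complete_compact; [|apply linf_closure_complete].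
      apply totally_bounded_closure, lim_embed_totally_bounded.
  - intros [x Hx]. exact (proj1 (lim_set_time x Hx)).
  - intros x y. apply dinf_ge.
Qed.

Definition lim_index_near j a : nat :=
  proj1_sig (constructive_indefinite_description _ (lim_net_covers a j)).

Lemma lim_index_near_spec j a : (lim_index_near j a < net_size nets j)%nat /\
  lim_dist nets a (pair_nat j (lim_index_near j a)) <= radius nets j.
Proof. exact (proj2_sig (constructive_indefinite_description _ (lim_net_covers a j))). Qed.

Definition shadow j a : Y j := net nets j j (lim_index_near j a).

(* Coordinate [k] of the Fréchet map of [Y j] must stay near the shadow of the limit point
   [fst_nat k], yet every net point [snd_nat k] has to be used for density; the net point is
   taken exactly when it is close enough to that shadow. *)
Definition frechet_seq j k : Y j :=
  if Rle_dec (d j (flat_net (net nets) j (snd_nat k)) (shadow j (fst_nat k))) (3 * radius nets j)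
  then flat_net (net nets) j (snd_nat k) else shadow j (fst_nat k).

Lemma frechet_seq_near_shadow j k :
  d j (frechet_seq j k) (shadow j (fst_nat k)) <= 3 * radius nets j.
Proof.
  unfold frechet_seq. destruct Rle_dec as [H|H]; auto.
  rewrite (metric_refl (Hd j)). pose proof (radius_pos nets j). lra.
Qed.

Lemma flat_net_near_shadow j q :
  exists a, d j (flat_net (net nets) j q) (shadow j a) <= 3 * radius nets j.
Proof.
  destruct (net_covers nets j j (flat_net (net nets) j q)) as [i [Hi Hdi]].
  exists (pair_nat j i). unfold shadow.
  destruct (lim_index_near_spec j (pair_nat j i)) as [Hi' Hlim].
  pose proof (net_dist_accurate nets j Hi Hi') as Hacc. apply Rabs_le_bounds in Hacc.
  pose proof (metric_triang (Hd j) (flat_net (net nets) j q) (net nets j j i)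
    (net nets j j (lim_index_near j (pair_nat j i)))) as Htri.
  rewrite (metric_sym (Hd j) _ (net nets j j i)) in Htri. lra.
Qed.

Lemma frechet_seq_dense j : dense_seq (d j) (frechet_seq j).
Proof.
  intros x eps Heps. destruct (flat_net_dense j x eps Heps) as [q Hq].
  destruct (flat_net_near_shadow j q) as [a Ha].
  exists (pair_nat a q). unfold frechet_seq. rewrite fst_nat_pair, snd_nat_pair.
  destruct Rle_dec; [exact Hq | contradiction].
Qed.

Definition corresponds j (x : Y j) (w : Xinf) : Prop :=
  exists i, (i < net_size nets j)%nat /\ d j (net nets j j i) x < radius nets j /\
    dinf w (embed (pair_nat j i)) <= 2 * radius nets j.

Lemma corresponds_to_lim j x : exists w, corresponds j x w.
Proof.
  destruct (net_covers nets j j x) as [i [Hi Hdi]].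
  exists (embed (pair_nat j i)), i. repeat split; auto.
  rewrite (metric_refl dinf_metric). pose proof (radius_pos nets j). lra.
Qed.

Lemma corresponds_from_lim j w : exists x, corresponds j x w.
Proof.
  destruct (Xinf_net w j) as [i [Hi Hwi]].
  exists (net nets j j i), i. repeat split; auto.
  rewrite (metric_refl (Hd j)). apply radius_pos.
Qed.

Lemma shadow_corresponds j a : corresponds j (shadow j a) (embed a).
Proof.
  destruct (lim_index_near_spec j a) as [Hi Hlim].
  exists (lim_index_near j a). repeat split; auto.
  - unfold shadow. rewrite (metric_refl (Hd j)). apply radius_pos.
  - rewrite dinf_embed. pose proof (radius_pos nets j). lra.
Qed.

Lemma corresponds_dist j x x' w w' : corresponds j x w -> corresponds j x' w' ->
  Rabs (d j x x' - dinf w w') <= 7 * radius nets j.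
Proof.
  intros [i [Hi [Hx Hw]]] [i' [Hi' [Hx' Hw']]].
  pose proof (metric_dist_sub_le (Hd j) x (net nets j j i) x' (net nets j j i')) as H1.
  rewrite (metric_sym (Hd j)) in Hx, Hx'.
  pose proof (net_dist_accurate nets j Hi Hi') as H2. rewrite <- !dinf_embed in H2.
  pose proof (metric_dist_sub_le dinf_metric (embed (pair_nat j i)) w (embed (pair_nat j i')) w')
    as H3.
  rewrite (metric_sym dinf_metric _ w), (metric_sym dinf_metric (embed (pair_nat j i')) w') in H3.
  pose proof (Rabs_sub_triang (d j x x') (d j (net nets j j i) (net nets j j i'))
    (dinf w w')) as T1.
  pose proof (Rabs_sub_triang (d j (net nets j j i) (net nets j j i'))
    (dinf (embed (pair_nat j i)) (embed (pair_nat j i'))) (dinf w w')) as T2.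
  lra.
Qed.

Lemma corresponds_kappa j x w : corresponds j x w ->
  linf_le (kappa (tau j) (d j) (frechet_seq j) x) (coords w) (10 * radius nets j).
Proof.
  intros Hxw. pose proof (radius_pos nets j). intros [|k]; simpl.
  - destruct Hxw as [i [Hi [Hx Hw]]].
    pose proof (nets_lipschitz nets j x (net nets j j i)) as H1.
    rewrite (metric_sym (Hd j)) in H1.
    pose proof (net_time_accurate nets j Hi) as H2.
    pose proof (dinf_ge w (embed (pair_nat j i)) O) as H3.
    pose proof (Rabs_sub_triang (tau j x) (tau j (net nets j j i)) (coords w O)).
    pose proof (Rabs_sub_triang (tau j (net nets j j i)) (lim_time nets (pair_nat j i))
      (coords w O)).
    change (coords (embed (pair_nat j i)) O) with (lim_time nets (pair_nat j i)) in H3.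
    rewrite Rabs_minus_sym in H3. lra.
  - rewrite Xinf_coord.
    pose proof (corresponds_dist j _ _ _ _ (shadow_corresponds j (fst_nat k)) Hxw) as H1.
    pose proof (metric_dist_sub_le (Hd j) (frechet_seq j k) (shadow j (fst_nat k)) x x) as H2.
    rewrite (metric_refl (Hd j) x) in H2.
    pose proof (frechet_seq_near_shadow j k).
    pose proof (Rabs_sub_triang (d j (frechet_seq j k) x) (d j (shadow j (fst_nat k)) x)
      (dinf (embed (fst_nat k)) w)).
    lra.
Qed.

Definition frechet_tails (z : seqR) : Prop :=
  (exists j (x : Y j), z = tail (kappa (tau j) (d j) (frechet_seq j) x)) \/
  (exists a, z = tail (lim_embed a)).

Definition tail_closure : seqR -> Prop := linf_closure frechet_tails.

Lemma frechet_tails_bounds u i : frechet_tails u -> 0 <= u i <= D.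
Proof.
  intros [[j [x ->]] | [a ->]]; unfold tail; simpl.
  - split; [apply (metric_nonneg (Hd j)) | apply (nets_diam nets)].
  - apply lim_dist_bounds.
Qed.

(* Early spaces are covered by their own finite nets; the later ones are close to the limit
   space, which is covered by finitely many embedded limit points. *)
Lemma frechet_tails_totally_bounded : totally_bounded frechet_tails.
Proof.
  intros eps Heps. destruct (radius_small nets (eps := eps / 12)) as [m Hm]; [lra|].
  pose proof (radius_pos nets m).
  pose (lim_centers := map (fun i => tail (lim_embed (pair_nat m i))) (seq 0 (net_size nets m))).
  pose (early_centers := flat_map (fun j =>
    map (fun i => tail (kappa (tau j) (d j) (frechet_seq j) (net nets j m i)))
      (seq 0 (net_size nets m))) (seq 0 m)).
  assert (Hlim : forall w, exists c, In c lim_centers /\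
            linf_le (tail (coords w)) c (2 * radius nets m)).
  { intros w. destruct (Xinf_net w m) as [i [Hi Hwi]].
    exists (tail (lim_embed (pair_nat m i))). split.
    - apply (in_map (fun i => tail (lim_embed (pair_nat m i)))), in_seq. lia.
    - apply linf_le_tail, linf_le_weaken with (dinf w (embed (pair_nat m i)));
        [exact (linf_le_dinf w (embed (pair_nat m i))) | exact Hwi]. }
  exists (lim_centers ++ early_centers).
  intros u [[j [x ->]] | [a ->]].
  - destruct (Compare_dec.lt_dec j m) as [Hjm|Hjm].
    + destruct (net_covers nets j m x) as [i [Hi Hdi]].
      exists (tail (kappa (tau j) (d j) (frechet_seq j) (net nets j m i))). split.
      * apply in_or_app. right. apply in_flat_map. exists j. split; [apply in_seq; lia|].
        apply (in_map (fun i => tail (kappa (tau j) (d j) (frechet_seq j) (net nets j m i)))).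
        apply in_seq. lia.
      * apply linf_le_tail, linf_le_weaken with (d j x (net nets j m i));
          [apply kappa_lipschitz; [apply Hd | apply (nets_lipschitz nets)]|].
        rewrite (metric_sym (Hd j)). lra.
    + destruct (corresponds_to_lim j x) as [w Hw].
      destruct (Hlim w) as [c [Hc Hwc]]. exists c. split; [apply in_or_app; auto|].
      pose proof (radius_antimono nets (m := m) (m' := j) ltac:(lia)).
      apply linf_le_weaken with (10 * radius nets j + 2 * radius nets m); [|lra].
      apply linf_le_trans with (tail (coords w)); [|exact Hwc].
      apply linf_le_tail, corresponds_kappa, Hw.
  - destruct (Hlim (embed a)) as [c [Hc Hac]]. exists c. split; [apply in_or_app; auto|].
    apply linf_le_weaken with (2 * radius nets m); [exact Hac | lra].
Qed.

Lemma tail_closure_compact : linf_compact tail_closure.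
Proof.
  split.
  - intros z Hz. exists (D + 1). intros i.
    destruct (Hz 1) as [u [Hu Hzu]]; [lra|].
    pose proof (frechet_tails_bounds u i Hu). specialize (Hzu i).
    apply Rabs_le_bounds in Hzu. apply Rabs_le. lra.
  - apply totally_bounded_complete_compact; [|apply linf_closure_complete].
    apply totally_bounded_closure, frechet_tails_totally_bounded.
Qed.

Lemma kappa_in_slab j x : time_slab T tail_closure (kappa (tau j) (d j) (frechet_seq j) x).
Proof.
  split; [apply (nets_time nets)|].
  apply linf_closure_incl. left. exists j, x. reflexivity.
Qed.

Lemma kappa_inf_in_slab x : time_slab T tail_closure (kappa tinf dinf Ninf x).
Proof.
  rewrite kappa_inf. destruct x as [w Hw]. split; [exact (lim_set_time w Hw)|].
  intros eps Heps. destruct (Hw eps Heps) as [u [[a ->] Hwa]].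
  exists (tail (lim_embed a)). split; [right; exists a; reflexivity|].
  exact (linf_le_tail _ _ _ Hwa).
Qed.

Lemma eventually_radius_lt c eps : 0 < c -> 0 < eps ->
  eventually (fun j => c * radius nets j < eps).
Proof.
  intros Hc Heps. destruct (radius_small nets (eps := eps / c)) as [m Hm].
  { apply Rdiv_lt_0_compat; auto. }
  exists m. intros j Hj. pose proof (radius_antimono nets Hj).
  apply Rmult_lt_compat_l with (r := c) in Hm; [|exact Hc].
  replace (c * (eps / c)) with eps in Hm by (field; lra).
  assert (c * radius nets j <= c * radius nets m) by (apply Rmult_le_compat_l; lra). lra.
Qed.

Lemma hausdorff_kappa_lt j eps : 20 * radius nets j < eps ->
  hausdorff_lt (image (kappa (tau j) (d j) (frechet_seq j))) (image (kappa tinf dinf Ninf)) eps.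
Proof.
  intros H. pose proof (radius_pos nets j).
  exists (20 * radius nets j). split; [lra|]. split; [lra|]. split.
  - intros u [x <-]. destruct (corresponds_to_lim j x) as [w Hw].
    exists (coords w). split; [exists w; apply kappa_inf|].
    apply linf_le_lt with (10 * radius nets j); [apply corresponds_kappa; auto | lra].
  - intros w [x <-]. rewrite kappa_inf. destruct (corresponds_from_lim j x) as [y Hy].
    exists (kappa (tau j) (d j) (frechet_seq j) y). split; [exists y; reflexivity|].
    apply linf_le_lt with (10 * radius nets j); [apply corresponds_kappa; auto | lra].
Qed.

Lemma hausdorff_convergence eps : 0 < eps -> eventually (fun j =>
  hausdorff_lt (image (kappa (tau j) (d j) (frechet_seq j))) (image (kappa tinf dinf Ninf)) eps).
Proof.
  intros Heps. destruct (eventually_radius_lt 20 eps) as [N HN]; [lra | auto |].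
  exists N. intros j Hj. apply hausdorff_kappa_lt, HN, Hj.
Qed.

Lemma intrinsic_convergence eps : 0 < eps ->
  eventually (fun j => intrinsic_tH_lt (d j) (tau j) dinf tinf eps).
Proof.
  intros Heps. destruct (hausdorff_convergence eps Heps) as [N HN].
  exists N. intros j Hj. exists (frechet_seq j), Ninf.
  split; [apply frechet_seq_dense|]. split; [exact Ninf_dense | exact (HN j Hj)].
Qed.

(* The factor [nat -> bool] carries no information: it only makes the set of addresses
   uncountable even when every [Y j] is finite. *)
Definition address : Type :=
  ((nat -> bool) * {p : Xinf * (forall j, Y j) | forall j, corresponds j (snd p j) (fst p)})%type.

Definition addr_pt j (a : address) : Y j := snd (proj1_sig (snd a)) j.

Definition addr_lim (a : address) : Xinf := fst (proj1_sig (snd a)).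

Lemma corresponding_family w : {f : forall j, Y j | forall j, corresponds j (f j) w}.
Proof.
  exists (fun j => proj1_sig (constructive_indefinite_description _ (corresponds_from_lim j w))).
  intros j. exact (proj2_sig (constructive_indefinite_description _ (corresponds_from_lim j w))).
Qed.

Lemma address_uncountable : uncountable_type address.
Proof.
  apply uncountable_bits_prod.
  destruct (corresponding_family (embed 0)) as [f Hf].
  exact (exist _ (embed 0, f) Hf).
Qed.

Lemma addr_pt_surj j : surj (addr_pt j).
Proof.
  intros y. destruct (corresponds_to_lim j y) as [w Hw].
  destruct (corresponding_family w) as [f Hf].
  destruct (update_family Y (fun j x => corresponds j x w) f j y Hf Hw) as [g [Hg Hgj]].
  exists ((fun _ => true), exist _ (w, g) Hg). exact Hgj.
Qed.

Lemma addr_lim_surj : surj addr_lim.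
Proof.
  intros w. destruct (corresponding_family w) as [f Hf].
  exists ((fun _ => true), exist _ (w, f) Hf). reflexivity.
Qed.

Lemma addr_kappa_cv eps : 0 < eps -> eventually (fun j => forall a,
  linf_le (kappa (tau j) (d j) (frechet_seq j) (addr_pt j a))
          (kappa tinf dinf Ninf (addr_lim a)) eps).
Proof.
  intros Heps. destruct (eventually_radius_lt 10 eps) as [N HN]; [lra | auto |].
  exists N. intros j Hj [b [[w f] Hf]]. unfold addr_pt, addr_lim; simpl.
  rewrite kappa_inf. apply linf_le_weaken with (10 * radius nets j).
  - apply corresponds_kappa, (Hf j).
  - apply Rlt_le, HN, Hj.
Qed.

Lemma addr_time_cv eps : 0 < eps ->
  eventually (fun j => forall a, Rabs (tau j (addr_pt j a) - tinf (addr_lim a)) <= eps).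
Proof.
  intros Heps. destruct (addr_kappa_cv eps Heps) as [N HN].
  exists N. intros j Hj a. exact (HN j Hj a O).
Qed.

Lemma addr_dist_cv eps : 0 < eps -> eventually (fun j => forall a a',
  Rabs (d j (addr_pt j a) (addr_pt j a') - dinf (addr_lim a) (addr_lim a')) <= eps).
Proof.
  intros Heps. destruct (eventually_radius_lt 7 eps) as [N HN]; [lra | auto |].
  exists N. intros j Hj [b [[w f] Hf]] [b' [[w' f'] Hf']]. unfold addr_pt, addr_lim; simpl.
  pose proof (corresponds_dist j (f j) (f' j) w w' (Hf j) (Hf' j)). specialize (HN j Hj). lra.
Qed.

End LimitSpace.

(** * Convergent nets along a subsequence *)

Section ConvergentSubsequence.

Variables (X : nat -> Type) (d : forall j, X j -> X j -> R) (tau : forall j, X j -> R)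
  (D tmax : R).
Hypothesis D_pos : 0 < D.
Hypothesis tmax_pos : 0 < tmax.
Hypothesis d_metric : forall j, is_metric (d j).
Hypothesis tau_lipschitz : forall j x y, Rabs (tau j x - tau j y) <= d j x y.
Hypothesis d_bounded : forall j x y, d j x y <= D.
Hypothesis tau_bounded : forall j x, 0 <= tau j x <= tmax.
Hypothesis equicompact : forall r, 0 < r <= D ->
  exists Nr : nat, forall j, exists p : nat -> X j,
    forall x : X j, exists i, (i < Nr)%nat /\ d j (p i) x < r.

Lemma uniform_nets : exists (size : nat -> nat) (net : forall j, nat -> nat -> X j),
  forall j m x, exists i, (i < size m)%nat /\ d j (net j m i) x < D * inv_succ m.
Proof.
  destruct (choice (fun m Nr => forall j, exists p : nat -> X j,
    forall x, exists i, (i < Nr)%nat /\ d j (p i) x < D * inv_succ m)) as [size Hsize].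
  { intros m. apply equicompact.
    pose proof (inv_succ_pos m). pose proof (inv_succ_le_1 m). split; nra. }
  exists size, (fun j m => proj1_sig (constructive_indefinite_description _ (Hsize m j))).
  intros j m. exact (proj2_sig (constructive_indefinite_description _ (Hsize m j))).
Qed.

Lemma convergent_net_data (net : forall j, nat -> nat -> X j) :
  exists sg, strictly_increasing sg /\ exists (dl : nat -> nat -> R) (tl : nat -> R),
    (forall a b, Un_cv (fun j => d (sg j) (flat_net net (sg j) a) (flat_net net (sg j) b))
                       (dl a b)) /\
    (forall a, Un_cv (fun j => tau (sg j) (flat_net net (sg j) a)) (tl a)).
Proof.
  pose (v := fun j n => match snd_nat n with
    | O => tau j (flat_net net j (fst_nat n))
    | S b => d j (flat_net net j (fst_nat n)) (flat_net net j b) end).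
  destruct (diagonal_extraction v (D + tmax)) as [sg [Hsg [lim Hlim]]].
  { intros j n. unfold v. destruct (snd_nat n) as [|b]; apply Rabs_le.
    - pose proof (tau_bounded j (flat_net net j (fst_nat n))). lra.
    - pose proof (metric_nonneg (d_metric j) (flat_net net j (fst_nat n)) (flat_net net j b)).
      pose proof (d_bounded j (flat_net net j (fst_nat n)) (flat_net net j b)). lra. }
  exists sg. split; [exact Hsg|].
  exists (fun a b => lim (pair_nat a (S b))), (fun a => lim (pair_nat a O)).
  split; [intros a b | intros a]; eapply Un_cv_ext; try apply Hlim;
    intros j; unfold v; rewrite fst_nat_pair, snd_nat_pair; reflexivity.
Qed.

Lemma eventually_accurate_nets (net : forall j, nat -> nat -> X j) size sg dl tl
  (eps : nat -> R) :
  (forall a b, Un_cv (fun j => d (sg j) (flat_net net (sg j) a) (flat_net net (sg j) b))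
                     (dl a b)) ->
  (forall a, Un_cv (fun j => tau (sg j) (flat_net net (sg j) a)) (tl a)) ->
  (forall m, 0 < eps m) ->
  forall m, eventually (fun j =>
    (forall i, (i < size m)%nat -> forall i', (i' < size m)%nat ->
       Rabs (d (sg j) (net (sg j) m i) (net (sg j) m i') - dl (pair_nat m i) (pair_nat m i'))
         <= eps m) /\
    (forall i, (i < size m)%nat ->
       Rabs (tau (sg j) (net (sg j) m i) - tl (pair_nat m i)) <= eps m)).
Proof.
  intros Hdl Htl Heps m.
  apply eventually_and; apply eventually_forall_lt; intros i Hi;
    [apply eventually_forall_lt; intros i' Hi'|].
  - destruct (Un_cv_eventually_close _ _ _ (Hdl (pair_nat m i) (pair_nat m i')) (Heps m))
      as [N HN].
    exists N. intros j Hj. specialize (HN j Hj). rewrite !flat_net_pair in HN. exact HN.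
  - destruct (Un_cv_eventually_close _ _ _ (Htl (pair_nat m i)) (Heps m)) as [N HN].
    exists N. intros j Hj. specialize (HN j Hj). rewrite flat_net_pair in HN. exact HN.
Qed.

Lemma subsequence_with_convergent_nets : exists sub, strictly_increasing sub /\
  inhabited (ConvergentNets (fun j => X (sub j)) (fun j => d (sub j)) (fun j => tau (sub j))
                            D tmax).
Proof.
  destruct uniform_nets as [size [net Hnet]].
  destruct (convergent_net_data net) as [sg [Hsg [dl [tl [Hdl Htl]]]]].
  assert (Hr : forall m, 0 < D * inv_succ m).
  { intros m. apply Rmult_lt_0_compat; [exact D_pos | apply inv_succ_pos]. }
  destruct (eventually_diagonal _ (eventually_accurate_nets net size sg dl tl _ Hdl Htl Hr))
    as [phi [Hphi Hacc]].
  pose proof (strictly_increasing_ge_id phi Hphi) as Hphi_ge.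
  exists (fun j => sg (phi j)). split; [exact (strictly_increasing_comp _ _ Hsg Hphi)|].
  constructor. exact {|
    nets_metric := fun j => d_metric (sg (phi j));
    nets_lipschitz := fun j => tau_lipschitz (sg (phi j));
    nets_diam := fun j => d_bounded (sg (phi j));
    nets_time := fun j => tau_bounded (sg (phi j));
    nets_diam_nonneg := Rlt_le _ _ D_pos;
    nets_time_nonneg := Rlt_le _ _ tmax_pos;
    radius := fun m => D * inv_succ m;
    radius_pos := Hr;
    radius_antimono := fun m m' Hm =>
      Rmult_le_compat_l _ _ _ (Rlt_le _ _ D_pos) (inv_succ_le m m' Hm);
    radius_small := fun eps => scaled_inv_succ_small D eps D_pos;
    net_size := size;
    net := fun j => net (sg (phi j));
    net_covers := fun j => Hnet (sg (phi j));
    lim_dist := dl;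
    lim_time := tl;
    lim_dist_cv := fun a b => Un_cv_subseq _ _ phi (Hdl a b) Hphi_ge;
    lim_time_cv := fun a => Un_cv_subseq _ _ phi (Htl a) Hphi_ge;
    net_dist_accurate := fun j => proj1 (Hacc j);
    net_time_accurate := fun j => proj2 (Hacc j) |}.
Qed.

End ConvergentSubsequence.

Theorem theorem3p1
  (X : nat -> Type) (d : forall j, X j -> X j -> R) (tau : forall j, X j -> R)
  (Hne : forall j, inhabited (X j))
  (Hcpt : forall j, compact_timed_metric_space (d j) (tau j))
  (D : R) (HD : 0 < D)
  (Hdiam : forall j (x y : X j), d j x y <= D)
  (Hequi : forall r, 0 < r <= D ->
     exists Nr : nat, forall j, exists p : nat -> X j,
       forall x : X j, exists i, (i < Nr)%nat /\ d j (p i) x < r)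
  (tmax : R) (Htmax : 0 < tmax)
  (Htau : forall j (x : X j), 0 <= tau j x <= tmax) :
  exists sub : nat -> nat, (forall n, (sub n < sub (S n))%nat) /\
  exists (Xinf : Type) (dinf : Xinf -> Xinf -> R) (tinf : Xinf -> R),
    inhabited Xinf /\ compact_timed_metric_space dinf tinf /\
    (* intrinsic timed Hausdorff convergence *)
    (forall eps, 0 < eps -> exists N, forall j, (N <= j)%nat ->
       intrinsic_tH_lt (d (sub j)) (tau (sub j)) dinf tinf eps) /\
    exists Z : seqR -> Prop, linf_compact Z /\
    exists (Ns : forall j, nat -> X (sub j)) (Ninf : nat -> Xinf),
      (forall j, dense_seq (d (sub j)) (Ns j)) /\ dense_seq dinf Ninf /\
      (forall j (x : X (sub j)), time_slab tmax Z (kappa (tau (sub j)) (d (sub j)) (Ns j) x)) /\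
      (forall x : Xinf, time_slab tmax Z (kappa tinf dinf Ninf x)) /\
      (forall eps, 0 < eps -> exists N, forall j, (N <= j)%nat ->
         hausdorff_lt (image (kappa (tau (sub j)) (d (sub j)) (Ns j)))
                      (image (kappa tinf dinf Ninf)) eps) /\
      exists (A : Type) (I : forall j, A -> X (sub j)) (Iinf : A -> Xinf),
        uncountable_type A /\ (forall j, surj (I j)) /\ surj Iinf /\
        (forall eps, 0 < eps -> exists N, forall j, (N <= j)%nat -> forall a : A,
           linf_le (kappa (tau (sub j)) (d (sub j)) (Ns j) (I j a))
                   (kappa tinf dinf Ninf (Iinf a)) eps) /\
        (forall eps, 0 < eps -> exists N, forall j, (N <= j)%nat -> forall a : A,
           Rabs (tau (sub j) (I j a) - tinf (Iinf a)) <= eps) /\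
        (forall eps, 0 < eps -> exists N, forall j, (N <= j)%nat -> forall a a' : A,
           Rabs (d (sub j) (I j a) (I j a') - dinf (Iinf a) (Iinf a')) <= eps).
Proof.
  destruct (subsequence_with_convergent_nets X d tau D tmax HD Htmax
    (fun j => proj1 (Hcpt j)) (fun j => proj2 (proj2 (proj2 (Hcpt j)))) Hdiam Htau Hequi)
    as [sub [Hsub [nets]]].
  exists sub. split; [exact Hsub|].
  exists (Xinf nets), (dinf nets), (tinf nets).
  split; [exact (inhabits (Ninf nets 0))|].
  split; [exact (Xinf_compact nets)|].
  split; [exact (intrinsic_convergence nets)|].
  exists (tail_closure nets). split; [exact (tail_closure_compact nets)|].
  exists (frechet_seq nets), (Ninf nets).
  split; [exact (frechet_seq_dense nets)|]. split; [exact (Ninf_dense nets)|].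
  split; [exact (kappa_in_slab nets)|]. split; [exact (kappa_inf_in_slab nets)|].
  split; [exact (hausdorff_convergence nets)|].
  exists (address nets), (addr_pt nets), (addr_lim nets).
  split; [exact (address_uncountable nets)|].
  split; [exact (addr_pt_surj nets)|]. split; [exact (addr_lim_surj nets)|].
  split; [exact (addr_kappa_cv nets)|]. split; [exact (addr_time_cv nets)|].
  exact (addr_dist_cv nets).
Qed.
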